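(* Let $g$ be a probability density on $\mathbb{R}$ which is unimodal, symmetric about $0$, and logconcave, with survivor function $\bar G = 1-G$. Then for all $z\ge 0$: (a) $\displaystyle \frac{g(z)}{g(2z)} \ge \frac{1}{2\bar G(z)}-1$; (b) $\displaystyle \frac{\bar G(z)}{\bar G(2z)} \ge \frac{1}{2\bar G(z)}-1$.
   Context: A density $g$ on $\mathbb{R}$ is logconcave if $\log g$ is concave on the support of $g$. Unimodal and symmetric about $0$ means $g(z)=g(-z)$ and $g$ is nonincreasing on $[0,\infty)$. $G$ is the cdf of $g$. Ratios are considered where denominators are positive. *)

From Stdlib Require Import Reals Lra.
Open Scope R_scope.

Definition is_density_with_cdf (g G : R -> R) : Prop :=
  (forall x, 0 <= g x) /\
  (forall a b, a <= b ->
     exists pr : Riemann_integrable g a b, RiemannInt pr = G b - G a) /\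
  (forall eps, 0 < eps -> exists M, forall x, x <= - M -> Rabs (G x) < eps) /\
  (forall eps, 0 < eps -> exists M, forall x, M <= x -> Rabs (G x - 1) < eps).

Definition symmetric_unimodal (g : R -> R) : Prop :=
  (forall z, g z = g (- z)) /\
  (forall x y, 0 <= x -> x <= y -> g y <= g x).

(* log g is concave on the support {g > 0} (which is thus an interval) *)
Definition logconcave (g : R -> R) : Prop :=
  (forall x y z, x <= y <= z -> 0 < g x -> 0 < g z -> 0 < g y) /\
  (forall x y l, 0 < g x -> 0 < g y -> 0 <= l <= 1 ->
     l * ln (g x) + (1 - l) * ln (g y) <= ln (g (l * x + (1 - l) * y))).

Definition survivor (G : R -> R) (z : R) : R := 1 - G z.

From Stdlib Require Import Reals Lra.
From Coquelicot Require Import Coquelicot.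
Open Scope R_scope.

(* Write S = 1 - G z, A = G z - G 0 (mass of [0,z]) and B = G (2z) - G z
   (mass of [z,2z]).  Logconcavity gives the exchange inequality
   g t * g (2z+s) <= g (z+t) * g (z+s) for 0 <= t <= z, s >= 0, because the
   pairs (t, 2z+s) and (z+t, z+s) have the same sum and the second is nested
   inside the first.  Integrating in t over [0,z] yields
   g (2z+s) * A <= g (z+s) * B                                       (Key).
   Symmetry gives G 0 <= 1/2, hence A >= 1/2 - S, while B <= S.
   (a) is (Key) at s = 0.  (b) follows by integrating (Key) once more in s
   over [0,M] and letting M -> oo, which gives A * (1 - G (2z)) <= S^2.
   The integrals are handled with Coquelicot's RInt, which is linked to the
   Riemann integrals of the hypothesis by RInt_Reals; unimodality is not
   needed (it is in any case implied by symmetry and logconcavity). *)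

Lemma div_le_div_cross p q r u :
  0 < q -> 0 < u -> p * u <= r * q -> p / q <= r / u.
Proof.
  intros Hq Hu H.
  replace (p / q) with (p * u * / (q * u)) by (field; lra).
  replace (r / u) with (r * q * / (q * u)) by (field; lra).
  apply Rmult_le_compat_r; [|exact H].
  apply Rlt_le, Rinv_0_lt_compat, Rmult_lt_0_compat; assumption.
Qed.

Section CdfIntegrals.

Variables g G : R -> R.
Hypothesis Hint : forall a b, a <= b ->
  exists pr : Riemann_integrable g a b, RiemannInt pr = G b - G a.

Lemma cdf_ex_RInt a b : ex_RInt g a b.
Proof.
  destruct (Rle_or_lt a b) as [Hab | Hab].
  - destruct (Hint a b Hab) as [pr _]. exact (ex_RInt_Reals_1 g a b pr).
  - apply ex_RInt_swap.
    destruct (Hint b a (Rlt_le _ _ Hab)) as [pr _].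
    exact (ex_RInt_Reals_1 g b a pr).
Qed.

Lemma cdf_RInt a b : RInt g a b = G b - G a.
Proof.
  destruct (Rle_or_lt a b) as [Hab | Hab].
  - destruct (Hint a b Hab) as [pr Hpr]. rewrite (RInt_Reals g a b pr). exact Hpr.
  - destruct (Hint b a (Rlt_le _ _ Hab)) as [pr Hpr].
    rewrite <- opp_RInt_swap by apply cdf_ex_RInt.
    rewrite (RInt_Reals g b a pr), Hpr. unfold opp; simpl; ring.
Qed.

Lemma cdf_increment_shift a L :
  G (a + L) - G a = RInt (fun t => g (a + t)) 0 L.
Proof.
  rewrite <- cdf_RInt.
  replace (RInt g a (a + L)) with (RInt g (1 * 0 + a) (1 * L + a))
    by (rewrite Rmult_0_r, Rmult_1_l, Rplus_0_l, Rplus_comm; reflexivity).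
  rewrite <- (RInt_comp_lin g 1 a 0 L (cdf_ex_RInt _ _)).
  apply RInt_ext. intros t _.
  change (1 * g (1 * t + a) = g (a + t)). rewrite !Rmult_1_l, Rplus_comm.
  reflexivity.
Qed.

Lemma cdf_shift_ex_RInt a L : ex_RInt (fun t => g (a + t)) 0 L.
Proof.
  assert (Hlin := ex_RInt_comp_lin g 1 a 0 L (cdf_ex_RInt _ _)).
  eapply ex_RInt_ext; [| exact Hlin].
  intros t _. change (1 * g (1 * t + a) = g (a + t)).
  rewrite !Rmult_1_l, Rplus_comm. reflexivity.
Qed.

Lemma shift_RInt_scal c a L :
  c * RInt (fun t => g (a + t)) 0 L = RInt (fun t => c * g (a + t)) 0 L.
Proof.
  exact (eq_sym (RInt_scal (fun t => g (a + t)) 0 L c (cdf_shift_ex_RInt a L))).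
Qed.

Lemma shift_scal_ex_RInt c a L : ex_RInt (fun t => c * g (a + t)) 0 L.
Proof.
  exact (ex_RInt_scal (fun t => g (a + t)) 0 L c (cdf_shift_ex_RInt a L)).
Qed.

Lemma cdf_increment_compare a b L c d :
  0 <= L -> (forall t, 0 < t < L -> c * g (a + t) <= d * g (b + t)) ->
  c * (G (a + L) - G a) <= d * (G (b + L) - G b).
Proof.
  intros HL Hcmp.
  rewrite !cdf_increment_shift, !shift_RInt_scal.
  exact (RInt_le _ _ 0 L HL (shift_scal_ex_RInt c a L)
           (shift_scal_ex_RInt d b L) Hcmp).
Qed.

Hypothesis Hpos : forall x, 0 <= g x.

Lemma cdf_nondecreasing x y : x <= y -> G x <= G y.
Proof.
  intros Hxy.
  assert (H := RInt_ge_0 g x y Hxy (cdf_ex_RInt x y) (fun t _ => Hpos t)).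
  rewrite cdf_RInt in H. lra.
Qed.

Hypothesis Hhi : forall eps, 0 < eps ->
  exists M, forall x, M <= x -> Rabs (G x - 1) < eps.

Lemma cdf_near_one eps x0 :
  0 < eps -> exists x, x0 <= x /\ 1 - eps < G x < 1 + eps.
Proof.
  intros Heps. destruct (Hhi eps Heps) as [M HM].
  exists (Rmax x0 M). split; [apply Rmax_l |].
  destruct (Rabs_def2 _ _ (HM _ (Rmax_r x0 M))). lra.
Qed.

(* A nondecreasing function tending to 1 stays below 1. *)
Lemma cdf_le_1 x : G x <= 1.
Proof.
  destruct (Rle_or_lt (G x) 1) as [H | H]; [exact H |].
  destruct (cdf_near_one (G x - 1) x) as [y [Hxy Hy]]; [lra |].
  assert (G x <= G y) by (apply cdf_nondecreasing, Hxy). lra.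
Qed.

Hypothesis Heven : forall z, g z = g (- z).

Lemma cdf_even_increment x : G x - G 0 = G 0 - G (- x).
Proof.
  assert (Hreflect : RInt g 0 (- x) = -1 * RInt g 0 x).
  { replace (RInt g 0 (- x)) with (RInt g (-1 * 0 + 0) (-1 * x + 0))
      by (replace (-1 * 0 + 0) with 0 by ring;
          replace (-1 * x + 0) with (- x) by ring; reflexivity).
    rewrite <- (RInt_comp_lin g (-1) 0 0 x (cdf_ex_RInt _ _)).
    transitivity (RInt (fun y => -1 * g y) 0 x).
    - apply RInt_ext. intros y _. change (-1 * g (-1 * y + 0) = -1 * g y).
      rewrite (Heven y). do 2 f_equal. ring.
    - exact (RInt_scal g 0 x (-1) (cdf_ex_RInt _ _)). }
  rewrite !cdf_RInt in Hreflect. lra.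
Qed.

Hypothesis Hlo : forall eps, 0 < eps ->
  exists M, forall x, x <= - M -> Rabs (G x) < eps.

Lemma cdf_at_0_le_half : G 0 <= 1 / 2.
Proof.
  assert (H2 : 2 * G 0 <= 1); [| lra].
  apply Rle_plus_epsilon. intros eps Heps.
  destruct (Hlo eps Heps) as [M HM].
  destruct (Rabs_def2 _ _ (HM (- M) (Rle_refl _))).
  assert (Hsym := cdf_even_increment (- M)). rewrite Ropp_involutive in Hsym.
  assert (G M <= 1) by apply cdf_le_1. lra.
Qed.

End CdfIntegrals.

Lemma logconcave_exchange (g : R -> R) (Hpos : forall x, 0 <= g x)
  (Hlc : logconcave g) x u v y :
  x <= u <= y -> u + v = x + y -> g x * g y <= g u * g v.
Proof.
  intros Hu Hsum. destruct Hlc as [Hsupp Hconc].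
  assert (Hprod := Rmult_le_pos _ _ (Hpos u) (Hpos v)).
  destruct (Hpos x) as [Hx | Hx]; [| rewrite <- Hx, Rmult_0_l; exact Hprod].
  destruct (Hpos y) as [Hy | Hy]; [| rewrite <- Hy, Rmult_0_r; exact Hprod].
  destruct (Req_dec x y) as [Exy | Nxy].
  { assert (u = x) by lra. assert (v = x) by lra. subst. lra. }
  assert (Hgu : 0 < g u) by (apply (Hsupp x u y); assumption).
  assert (Hgv : 0 < g v) by (apply (Hsupp x v y); [lra | assumption..]).
  set (l := (y - u) / (y - x)).
  assert (Hl : 0 <= l <= 1).
  { unfold l. split; [apply Rmult_le_pos; [lra | apply Rlt_le, Rinv_0_lt_compat; lra] |].
    apply Rmult_le_reg_r with (y - x); [lra |].
    unfold Rdiv. rewrite Rmult_assoc, Rinv_l; lra. }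
  assert (Eu : l * x + (1 - l) * y = u) by (unfold l; field; lra).
  assert (Ev : l * y + (1 - l) * x = v)
    by (replace v with (x + y - u) by lra; unfold l; field; lra).
  assert (Cu := Hconc x y l Hx Hy Hl). rewrite Eu in Cu.
  assert (Cv := Hconc y x l Hy Hx Hl). rewrite Ev in Cv.
  destruct (Rle_or_lt (g x * g y) (g u * g v)) as [Hle | Hlt]; [exact Hle |].
  exfalso. apply ln_increasing in Hlt; [| apply Rmult_lt_0_compat; assumption].
  rewrite !ln_mult in Hlt by assumption. lra.
Qed.

Section TailBounds.

Variables g G : R -> R.
Hypothesis Hint : forall a b, a <= b ->
  exists pr : Riemann_integrable g a b, RiemannInt pr = G b - G a.
Hypothesis Hpos : forall x, 0 <= g x.
Hypothesis Hlc : logconcave g.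

(* (Key): integrating the exchange inequality with x = t, u = z + t,
   v = z + s, y = 2z + s over t in [0, z]. *)
Lemma mass_ratio_key z s : 0 <= z -> 0 <= s ->
  g (2 * z + s) * (G z - G 0) <= g (z + s) * (G (2 * z) - G z).
Proof.
  intros Hz Hs.
  replace (G z - G 0) with (G (0 + z) - G 0) by (rewrite Rplus_0_l; reflexivity).
  replace (G (2 * z)) with (G (z + z)) by (f_equal; ring).
  apply (cdf_increment_compare g G Hint); [exact Hz |].
  intros t Ht. rewrite Rplus_0_l, (Rmult_comm (g (2 * z + s))),
    (Rmult_comm (g (z + s))).
  apply logconcave_exchange; [exact Hpos | exact Hlc | lra | ring].
Qed.

Hypothesis Hhi : forall eps, 0 < eps ->
  exists M, forall x, M <= x -> Rabs (G x - 1) < eps.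

(* Integrating (Key) over s in [0, oo):
   (G z - G 0) * (1 - G (2z)) <= (1 - G z)^2. *)
Lemma mass_tail_product z : 0 <= z ->
  (G z - G 0) * (1 - G (2 * z)) <= (1 - G z) * (1 - G z).
Proof.
  intros Hz.
  set (A := G z - G 0). set (B := G (2 * z) - G z).
  assert (Hmono := cdf_nondecreasing g G Hint Hpos).
  assert (Hle1 := cdf_le_1 g G Hint Hpos Hhi).
  assert (HA : 0 <= A) by (unfold A; assert (G 0 <= G z) by (apply Hmono, Hz); lra).
  assert (HB : 0 <= B <= 1 - G z).
  { unfold B. assert (G z <= G (2 * z)) by (apply Hmono; lra).
    assert (G (2 * z) <= 1) by apply Hle1. lra. }
  assert (Hpartial : forall M, 0 <= M ->
            A * (G (2 * z + M) - G (2 * z)) <= (1 - G z) * (1 - G z)).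
  { intros M HM.
    assert (Hcmp : A * (G (2 * z + M) - G (2 * z)) <= B * (G (z + M) - G z)).
    { apply (cdf_increment_compare g G Hint); [exact HM |].
      intros t Ht. rewrite (Rmult_comm A), (Rmult_comm B).
      apply mass_ratio_key; lra. }
    assert (G z <= G (z + M)) by (apply Hmono; lra).
    assert (G (z + M) <= 1) by apply Hle1.
    assert (B * (G (z + M) - G z) <= (1 - G z) * (1 - G z))
      by (apply Rmult_le_compat; lra).
    lra. }
  apply Rle_plus_epsilon. intros eps Heps.
  destruct (cdf_near_one G Hhi (eps / (A + 1)) (2 * z)) as [x [Hx HGx]].
  { apply Rdiv_lt_0_compat; lra. }
  assert (Hbound := Hpartial (x - 2 * z) ltac:(lra)).
  replace (2 * z + (x - 2 * z)) with x in Hbound by ring.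
  assert (Hrest : A * (1 - G x) <= eps).
  { apply Rle_trans with (A * (eps / (A + 1))).
    - apply Rmult_le_compat_l; lra.
    - unfold Rdiv. rewrite <- Rmult_assoc. apply Rmult_le_reg_r with (A + 1); [lra |].
      rewrite Rmult_assoc, Rinv_l by lra. nra. }
  lra.
Qed.

End TailBounds.

Theorem lemma2 (g G : R -> R)
  (Hdens : is_density_with_cdf g G)
  (Hsym : symmetric_unimodal g)
  (Hlc : logconcave g) :
  forall z, 0 <= z ->
    (0 < g (2 * z) -> 0 < survivor G z ->
       / (2 * survivor G z) - 1 <= g z / g (2 * z)) /\
    (0 < survivor G (2 * z) -> 0 < survivor G z ->
       / (2 * survivor G z) - 1 <= survivor G z / survivor G (2 * z)).
Proof.
  destruct Hdens as [Hpos [Hint [Hlo Hhi]]]. destruct Hsym as [Heven _].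
  intros z Hz. unfold survivor.
  assert (Hhalf := cdf_at_0_le_half g G Hint Hpos Hhi Heven Hlo).
  assert (HA : G z - 1 / 2 <= G z - G 0) by lra.
  assert (HB : G (2 * z) - G z <= 1 - G z)
    by (assert (Hle1 := cdf_le_1 g G Hint Hpos Hhi (2 * z)); lra).
  split; intros Hden HS;
    replace (/ (2 * (1 - G z)) - 1) with ((G z - 1 / 2) / (1 - G z)) by (field; lra);
    apply div_le_div_cross; try assumption.
  -
    assert (Hkey := mass_ratio_key g G Hint Hpos Hlc z 0 Hz (Rle_refl 0)).
    rewrite !Rplus_0_r in Hkey.
    assert (g z * (G (2 * z) - G z) <= g z * (1 - G z))
      by (apply Rmult_le_compat_l; [apply Hpos | exact HB]).
    assert ((G z - 1 / 2) * g (2 * z) <= (G z - G 0) * g (2 * z))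
      by (apply Rmult_le_compat_r; lra).
    lra.
  -
    assert (Htail := mass_tail_product g G Hint Hpos Hlc Hhi z Hz).
    assert ((G z - 1 / 2) * (1 - G (2 * z)) <= (G z - G 0) * (1 - G (2 * z)))
      by (apply Rmult_le_compat_r; lra).
    lra.
Qed.
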